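(* Let $(X,p_X)$ be a partial metric space and ${}^*X$ a nonstandard extension of $X$ with extended function ${}^*p_X$. For $x,y\in{}^*X$ write $x\approx^p_X y$ if ${}^*p_X(x,x)\approx{}^*p_X(x,y)\approx{}^*p_X(y,y)$ (where $a\approx b$ means $a-b$ is infinitesimal). Then $\approx^p_X$ is an equivalence relation on ${}^*X$.
   Context: A partial metric on a set $X$ is a function $p_X\colon X\times X\to\mathbb{R}_{\geq0}$ such that for all $x,y,z\in X$: (P1) $p_X(x,x)=p_X(x,y)=p_X(y,y)$ implies $x=y$; (P2) $p_X(x,x)\leq p_X(x,y)$; (P3) $p_X(x,y)=p_X(y,x)$; (P4) $p_X(x,z)+p_X(y,y)\leq p_X(x,y)+p_X(y,z)$. Nonstandard analysis: ${}^*X$, ${}^*\mathbb{R}$ denote nonstandard extensions (satisfying transfer), ${}^*p_X\colon{}^*X\times{}^*X\to{}^*\mathbb{R}_{\geq0}$ the extension of $p_X$. *)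

From HB Require Import structures.
From mathcomp Require Import all_boot all_order all_algebra.
From mathcomp Require Import reals.
Set Implicit Arguments. Unset Strict Implicit. Unset Printing Implicit Defensive.
Import Order.TTheory GRing.Theory Num.Theory.
Local Open Scope ring_scope.

(* Axioms (P0: nonnegativity, P1-P4) of a partial metric, over any ordered
   codomain F.  Used both for the standard p_X (F = R, the reals) and for the
   transferred statement about *p_X (F = *R). *)
Definition partial_metric (F : numDomainType) (X : Type) (p : X -> X -> F) : Prop :=
  [/\ (forall x y, 0 <= p x y),
      (forall x y, p x x = p x y -> p x y = p y y -> x = y),
      (forall x y, p x x <= p x y),
      (forall x y, p x y = p y x)
    & (forall x y z, p x z + p y y <= p x y + p y z)].

(* Nonstandard extension *R of R: an ordered field extension, given by an
   order-embedding ring morphism iota : R -> *R.  a in *R is infinitesimal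
   when |a| < iota r for every standard r > 0. *)
Definition infinitesimal (R : realType) (sR : realFieldType)
  (iota : R -> sR) (a : sR) : Prop :=
  forall r : R, 0 < r -> `|a| < iota r.

Definition infclose (R : realType) (sR : realFieldType)
  (iota : R -> sR) (a b : sR) : Prop := infinitesimal iota (a - b).

Definition papprox (R : realType) (sR : realFieldType) (iota : R -> sR)
  (sX : Type) (sp : sX -> sX -> sR) (x y : sX) : Prop :=
  infclose iota (sp x x) (sp x y) /\ infclose iota (sp x y) (sp y y).

Definition is_equivalence (T : Type) (r : T -> T -> Prop) : Prop :=
  [/\ (forall x, r x x),
      (forall x y, r x y -> r y x)
    & (forall x y z, r x y -> r y z -> r x z)].

From Pilot Require Import Defs.
From HB Require Import structures.
From mathcomp Require Import all_boot all_order all_algebra.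
From mathcomp Require Import reals.
From mathcomp Require Import lra.
Set Implicit Arguments. Unset Strict Implicit. Unset Printing Implicit Defensive.
Import Order.TTheory GRing.Theory Num.Theory.
Local Open Scope ring_scope.

(* For transitivity,
   the triangle inequality (P4) bounds the nonnegative gaps
   [*p(x,z) - *p(x,x)] and [*p(x,z) - *p(z,z)] by sums of two gaps from
   [x ≈^p y] and [y ≈^p z], and sums of infinitesimals are infinitesimal. *)

Section Infinitesimals.
Variables (R : realType) (sR : realFieldType) (iota : {rmorphism R -> sR}).
Hypothesis iota_mono : forall a b : R, (iota a <= iota b) = (a <= b).

Local Notation infinitesimal := (infinitesimal iota).
Local Notation infclose := (infclose iota).

Lemma iota_lt a b : (iota a < iota b) = (a < b).
Proof. by rewrite !ltNge iota_mono. Qed.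

Lemma infinitesimal0 : infinitesimal 0.
Proof. by move=> r r_gt0; rewrite normr0 -(rmorph0 iota) iota_lt. Qed.

Lemma infinitesimalN a : infinitesimal a -> infinitesimal (- a).
Proof. by move=> a_inf r r_gt0; rewrite normrN; apply: a_inf. Qed.

Lemma infinitesimalD a b :
  infinitesimal a -> infinitesimal b -> infinitesimal (a + b).
Proof.
move=> a_inf b_inf r r_gt0.
have r2_gt0 : 0 < r / 2 by rewrite divr_gt0.
apply: le_lt_trans (ler_normD a b) _.
by rewrite [r]splitr rmorphD ltrD ?a_inf ?b_inf.
Qed.

Lemma infinitesimal_le a b :
  0 <= a -> a <= b -> infinitesimal b -> infinitesimal a.
Proof.
move=> a_ge0 le_ab b_inf r r_gt0; apply: le_lt_trans (b_inf r r_gt0).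
by rewrite !ger0_norm // (le_trans a_ge0 le_ab).
Qed.

Lemma infclose_refl a : infclose a a.
Proof. by rewrite /Defs.infclose subrr; exact: infinitesimal0. Qed.

Lemma infclose_sym a b : infclose a b -> infclose b a.
Proof. by move=> /infinitesimalN; rewrite opprB. Qed.

Lemma infclose_gap_le a b c d e :
  a <= b -> b - a <= (c - a) + (e - d) ->
  infclose c a -> infclose d e -> infclose b a.
Proof.
move=> le_ab gap_le ca_close de_close; rewrite /Defs.infclose.
apply: (infinitesimal_le _ gap_le); first by rewrite subr_ge0.
exact: (infinitesimalD ca_close (infclose_sym de_close)).
Qed.

End Infinitesimals.

Section PartialMetricApprox.
Variables (R : realType) (sR : realFieldType) (iota : {rmorphism R -> sR}).
Hypothesis iota_mono : forall a b : R, (iota a <= iota b) = (a <= b).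
Variables (sX : Type) (sp : sX -> sX -> sR).
Hypothesis sp_pm : partial_metric sp.

Local Notation papprox := (papprox iota sp).

Lemma papprox_refl x : papprox x x.
Proof. by split; apply: infclose_refl. Qed.

Lemma papprox_sym x y : papprox x y -> papprox y x.
Proof.
case: sp_pm => _ _ _ sp_sym _ [xx_xy xy_yy].
by rewrite /papprox /= sp_sym; split; apply: infclose_sym.
Qed.

Lemma papprox_trans x y z : papprox x y -> papprox y z -> papprox x z.
Proof.
case: sp_pm => _ _ sp_le sp_sym sp_tri [xx_xy xy_yy] [yy_yz yz_zz].
have tri := sp_tri x y z.
split.
- apply/infclose_sym.
  by apply: (infclose_gap_le (sp_le x z) _ (infclose_sym xx_xy) yy_yz); lra.
- apply: (infclose_gap_le _ _ yz_zz (infclose_sym xy_yy)); last by lra.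
  by rewrite sp_sym sp_le.
Qed.

End PartialMetricApprox.

Theorem claim2p6
  (R : realType) (X : Type) (p : X -> X -> R) (hp : partial_metric p)
  (* the nonstandard extension *R of R *)
  (sR : realFieldType) (iota : {rmorphism R -> sR})
  (iota_mono : forall a b : R, (iota a <= iota b) = (a <= b))
  (* the nonstandard extension *X of X and the extended function *p_X *)
  (sX : Type) (iotaX : X -> sX) (sp : sX -> sX -> sR)
  (sp_ext : forall x y : X, sp (iotaX x) (iotaX y) = iota (p x y))
  (* transfer of the partial-metric axioms to *p_X *)
  (sp_transfer : partial_metric sp) :
  is_equivalence (papprox iota sp).
Proof.
split.
- exact: papprox_refl.
- exact: papprox_sym.
- exact: papprox_trans sp_transfer.
Qed.
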